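(* Let $N$ be a finite set, $f: 2^{N} \to \mathbb{R} \cup \{-\infty\}$ an M$^\natural$-concave function, $X, Y \in \mathrm{dom}\, f$ and $I \subseteq X \setminus Y$. Put $C = X \cap Y$, $X_0 = X \setminus Y$, $Y_0 = Y \setminus X$, and for $J \subseteq Y_0$ define $f_1(J) = f((X_0 \setminus I)\cup C \cup J)$ and $f_2(J) = f(I \cup C \cup (Y_0 \setminus J))$. For $q \in \mathbb{R}^{Y_0}$ define $g_1(q) = \max_{J \subseteq Y_0}\{f_1(J) - q(J)\}$ and $g_2(q) = \max_{J \subseteq Y_0}\{f_2(J) - q(J)\}$, where $q(J) = \sum_{j \in J} q_j$. Then for every $q \in \mathbb{R}^{Y_0}$, $$g_1(q) + g_2(-q) \geq f(X) + f(Y).$$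
   Context: For $f: 2^N \to \mathbb{R}\cup\{-\infty\}$, $\mathrm{dom}\, f = \{X \subseteq N : f(X) > -\infty\}$. Notation: $X - i = X \setminus \{i\}$, $Y + i = Y \cup \{i\}$, $X - i + j = (X\setminus\{i\})\cup\{j\}$, $Y + i - j = (Y \cup\{i\})\setminus\{j\}$. Conventions: $(-\infty)+a = a+(-\infty) = (-\infty)+(-\infty) = -\infty$ for $a \in \mathbb{R}$, $-\infty \le -\infty$, and a maximum over an empty set is $-\infty$. A function $f: 2^N \to \mathbb{R}\cup\{-\infty\}$ with $\mathrm{dom}\, f \neq \emptyset$ is M$^\natural$-concave if for all $X, Y \subseteq N$ and $i \in X \setminus Y$: $$f(X)+f(Y) \le \max\Big[ f(X-i)+f(Y+i),\ \max_{j \in Y\setminus X}\{ f(X-i+j)+f(Y+i-j)\}\Big].$$ *)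

(* Extended reals R ∪ {-oo} are modelled as [option R],
   with [None] standing for -oo. *)
From HB Require Import structures.
From mathcomp Require Import all_boot all_order all_algebra.
Set Implicit Arguments. Unset Strict Implicit. Unset Printing Implicit Defensive.
Import Order.TTheory GRing.Theory Num.Theory.
Local Open Scope ring_scope.

Section Ext.
Variable R : realDomainType.

Definition eadd (x y : option R) : option R :=
  match x, y with Some a, Some b => Some (a + b) | _, _ => None end.

Definition ele (x y : option R) : bool :=
  match x, y with
  | None, _ => true
  | Some _, None => false
  | Some a, Some b => a <= b
  end.

Definition emax (x y : option R) : option R := if ele x y then y else x.
End Ext.

Notation "\emax_ ( i 'in' A ) F" := (\big[@emax _/None]_(i in A) F)
  (at level 41, F at level 41, i, A at level 50).

Definition dom (N : finType) (R : realDomainType) (f : {set N} -> option R) :=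
  [set X : {set N} | f X != None].

Definition Mnat_concave (N : finType) (R : realDomainType)
    (f : {set N} -> option R) : Prop :=
  dom f != set0 /\
  forall (X Y : {set N}) (i : N), i \in X :\: Y ->
    ele (eadd (f X) (f Y))
        (emax (eadd (f (X :\ i)) (f (i |: Y)))
              (\emax_(j in Y :\: X) eadd (f (j |: (X :\ i))) (f ((i |: Y) :\ j)))).

From HB Require Import structures.
From mathcomp Require Import all_boot all_order all_algebra.
From mathcomp Require Import lra.
Import Order.TTheory GRing.Theory Num.Theory.
Local Open Scope ring_scope.

(* For Z disjoint from Y0 put G(Z) = max_{J ⊆ Y0} f(Z ∪ J) - q(J).  Applying the
   exchange axiom to maximisers of G(U) and G(L), for L ⊆ U and i ∈ U \ L, gives
   G(U) + G(L) <= G(U - i) + G(L + i), and an induction on |B \ A| turns this into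
   submodularity G(A ∪ B) + G(A ∩ B) <= G(A) + G(B).  With A = (X0 \ I) ∪ C and
   B = I ∪ C we have A ∪ B = X, A ∩ B = C, G(A) = g1(q), and reindexing J by Y0 \ J
   gives G(B) + q(Y0) <= g2(-q).  Hence
   f(X) + f(Y) - q(Y0) <= G(X) + G(C) <= G(A) + G(B) <= g1(q) + g2(-q) - q(Y0). *)

Section ExtendedReals.
Context {R : realDomainType}.
Implicit Types x y z : option R.

Lemma ele_refl x : ele x x.
Proof. by case: x => //= a; rewrite lexx. Qed.

Lemma ele_trans {x y z} : ele x y -> ele y z -> ele x z.
Proof. by move: x y z => [a|] [b|] [c|] //=; apply: le_trans. Qed.

Lemma ele_total x y : ele x y || ele y x.
Proof. by move: x y => [a|] [b|] //=; apply: le_total. Qed.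

Lemma ele_emaxl x y : ele x (emax x y).
Proof. by rewrite /emax; case: ifP => // _; apply: ele_refl. Qed.

Lemma ele_emaxr x y : ele y (emax x y).
Proof.
rewrite /emax; case: ifP => [_|xy]; first exact: ele_refl.
by have := ele_total x y; rewrite xy.
Qed.

Lemma emax_cases x y : emax x y = x \/ emax x y = y.
Proof. by rewrite /emax; case: ifP; [right|left]. Qed.

Lemma eaddA x y z : eadd x (eadd y z) = eadd (eadd x y) z.
Proof. by move: x y z => [a|] [b|] [c|] //=; rewrite addrA. Qed.

Lemma eaddNK x (s : R) : eadd (eadd x (Some (- s))) (Some s) = x.
Proof. by case: x => //= a; rewrite subrK. Qed.

Lemma ele_eadd {x x' y y'} : ele x x' -> ele y y' -> ele (eadd x y) (eadd x' y').
Proof. by move: x x' y y' => [a|] [a'|] [b|] [b'|] //=; apply: lerD. Qed.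

Lemma ele_eadd_transfer x y (c d g1 g2 : option R) (a1 a2 s1 s2 : R) :
    a1 + a2 = s1 + s2 -> ele (eadd x y) (eadd c d) ->
    ele (eadd c (Some s1)) g1 -> ele (eadd d (Some s2)) g2 ->
  ele (eadd (eadd x (Some a1)) (eadd y (Some a2))) (eadd g1 g2).
Proof. by move: x y c d g1 g2 => [?|] [?|] [?|] [?|] [?|] [?|] //= *; lra. Qed.

(* The first hypothesis only serves to make [u'] finite, so that the other two
   can be added up and [u'] cancelled. *)
Lemma ele_eadd_cancel (u l u' l' a b b' : option R) :
    ele (eadd u l) (eadd u' l') -> ele (eadd u' l) (eadd a b') ->
    ele (eadd u b') (eadd u' b) ->
  ele (eadd u l) (eadd a b).
Proof. by move: u l u' l' a b b' => [?|] [?|] [?|] [?|] [?|] [?|] [?|] //= *; lra. Qed.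

Lemma le_bigemax (I : eqType) (r : seq I) (P : pred I) (F : I -> option R) i :
  i \in r -> P i -> ele (F i) (\big[@emax R/None]_(j <- r | P j) F j).
Proof.
elim: r => // a r IH; rewrite inE big_cons => /predU1P[-> ->|ir Pi].
  exact: ele_emaxl.
case: ifP => _; last exact: IH.
exact: ele_trans (IH ir Pi) (ele_emaxr _ _).
Qed.

Lemma le_bigemax_in (T : finType) (A : {pred T}) (F : T -> option R) i :
  i \in A -> ele (F i) (\emax_(j in A) F j).
Proof. exact/le_bigemax/mem_index_enum. Qed.

Lemma bigemax_attained (T : finType) (A : {pred T}) (F : T -> option R) :
  \emax_(j in A) F j = None \/ exists2 i, i \in A & \emax_(j in A) F j = F i.
Proof.
elim/big_ind: _ => [|x y|i Ai]; [by left| |by right; exists i].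
by case: (emax_cases x y) => ->.
Qed.

End ExtendedReals.

Arguments le_bigemax_in {R T A} F {i}.
Arguments bigemax_attained {R T} A F.

Section MaxOverExtensions.
Context {R : realDomainType} {N : finType}.
Variable f : {set N} -> option R.
Variables (D : {set N}) (q : N -> R).
Implicit Types Z J U L A B : {set N}.

Definition maxext Z :=
  \emax_(J in powerset D) eadd (f (Z :|: J)) (Some (- \sum_(j in J) q j)).

Lemma le_maxext Z {J} : J \subset D ->
  ele (eadd (f (Z :|: J)) (Some (- \sum_(j in J) q j))) (maxext Z).
Proof. by move=> sJD; apply: le_bigemax_in; rewrite powersetE. Qed.

Lemma f_le_maxext Z : ele (f Z) (maxext Z).
Proof.
have := le_maxext Z (sub0set D); rewrite setU0 big_set0 oppr0.
by case: (f Z) => //= a; rewrite addr0.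
Qed.

Lemma maxext_attained Z : maxext Z = None \/
  exists2 J : {set N}, J \subset D & maxext Z = eadd (f (Z :|: J)) (Some (- \sum_(j in J) q j)).
Proof.
rewrite /maxext; have [->|[J]] := bigemax_attained (powerset D)
  (fun J => eadd (f (Z :|: J)) (Some (- \sum_(j in J) q j))); first by left.
by rewrite powersetE => sJD ->; right; exists J.
Qed.

Lemma le_maxext_compl Z :
  ele (eadd (maxext Z) (Some (\sum_(j in D) q j)))
      (\emax_(J in powerset D) eadd (f (Z :|: (D :\: J))) (Some (- \sum_(j in J) - q j))).
Proof.
have [->//|[K sKD ->]] := maxext_attained Z.
have DDK : D :\: (D :\: K) = K by rewrite setDDr setDv set0U (setIidPr sKD).
have KD : D :\: K \in powerset D by rewrite powersetE subsetDl.
have := le_bigemax_in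
  (fun J => eadd (f (Z :|: (D :\: J))) (Some (- \sum_(j in J) - q j))) KD.
rewrite /= DDK sumrN opprK; apply: ele_trans.
rewrite [\sum_(j in D) _](big_setID K) /= (setIidPr sKD).
by case: (f _) => //= a; rewrite addrA subrK.
Qed.

Hypothesis f_Mnat : Mnat_concave f.

Lemma maxext_exchange {U L i} :
    L \subset U -> [disjoint U & D] -> i \in U -> i \notin L ->
  ele (eadd (maxext U) (maxext L)) (eadd (maxext (U :\ i)) (maxext (i |: L))).
Proof.
move=> sLU dUD iU iL; have iD := disjointFr dUD iU.
have [->//|[J1 sJ1 ->]] := maxext_attained U.
have [->|[J2 sJ2 ->]] := maxext_attained L; first by case: (f (U :|: J1)).
have iJ1 : i \notin J1 by apply: contraFN iD => /(subsetP sJ1).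
have iJ2 : i \notin J2 by apply: contraFN iD => /(subsetP sJ2).
have iUJ : i \in (U :|: J1) :\: (L :|: J2) by rewrite !inE negb_or iL iJ2 iU.
have := f_Mnat.2 _ _ _ iUJ; set E := \emax_(j in _) _.
have [->|] := emax_cases (eadd (f ((U :|: J1) :\ i)) (f (i |: (L :|: J2)))) E.
  have -> : (U :|: J1) :\ i = (U :\ i) :|: J1.
    by apply/setP => x; rewrite !inE; case: eqVneq => // ->; rewrite (negbTE iJ1).
  rewrite setUA => exch.
  exact: ele_eadd_transfer erefl exch (le_maxext _ sJ1) (le_maxext _ sJ2).
move=> ->; rewrite /E; have [->|[j]] := bigemax_attained
  ((L :|: J2) :\: (U :|: J1))
  (fun j => eadd (f (j |: ((U :|: J1) :\ i))) (f ((i |: (L :|: J2)) :\ j))).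
  by move: (f (U :|: J1)) (f (L :|: J2)) => [?|] [?|].
rewrite !inE negb_or => /andP[/andP[jU jJ1] jLJ2] ->.
have jL : j \notin L by apply: contra jU => /(subsetP sLU).
have jJ2 : j \in J2 by move: jLJ2; rewrite (negbTE jL).
have ji : j != i by apply: contraNneq jU => ->.
have -> : j |: ((U :|: J1) :\ i) = (U :\ i) :|: (j |: J1).
  apply/setP => x; rewrite !inE; case: (eqVneq x i) => [->|_]; last by rewrite orbCA.
  by rewrite (negbTE iJ1).
have -> : (i |: (L :|: J2)) :\ j = (i |: L) :|: (J2 :\ j).
  apply/setP => x; rewrite !inE; case: (eqVneq x j) => [->|_]; last by rewrite orbA.
  by rewrite (negbTE ji) (negbTE jL).
have sJ1' : j |: J1 \subset D by rewrite subUset sub1set (subsetP sJ2) ?sJ1.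
have sJ2' : J2 :\ j \subset D by apply: subset_trans sJ2; apply: subD1set.
move=> exch; apply: ele_eadd_transfer exch (le_maxext _ sJ1') (le_maxext _ sJ2').
by rewrite big_setU1 //= (big_setD1 j jJ2) /=; lra.
Qed.

Lemma maxext_submodular A B : [disjoint A :|: B & D] ->
  ele (eadd (maxext (A :|: B)) (maxext (A :&: B))) (eadd (maxext A) (maxext B)).
Proof.
have [n] := ubnP #|B :\: A|; elim: n B => // n IH B; rewrite ltnS => leBn dD.
have [BA0|/set0Pn[i]] := eqVneq (B :\: A) set0.
  have sBA : B \subset A by rewrite -setD_eq0 BA0.
  by rewrite (setUidPl sBA) (setIidPr sBA) ele_refl.
rewrite inE => /andP[iA iB]; set B' := B :\ i.
have eU : A :|: B' = (A :|: B) :\ i.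
  by apply/setP => x; rewrite !inE; case: eqVneq => // ->; rewrite (negbTE iA).
have eI : A :&: B' = A :&: B.
  by apply/setP => x; rewrite !inE; case: eqVneq => // ->; rewrite (negbTE iA).
have ltB'n : (#|B' :\: A| < n)%N.
  have <- : (B :\: A) :\ i = B' :\: A by apply/setP => x; rewrite !inE andbCA.
  by apply: leq_trans leBn; apply/proper_card/properD1; rewrite !inE iA.
have dD' : [disjoint A :|: B' & D] by rewrite eU; apply: disjointWl dD; apply: subD1set.
have iU : i \in A :|: B by rewrite inE iB orbT.
have iI : i \notin A :&: B by rewrite inE negb_and iA.
have iB' : i \notin B' by rewrite !inE eqxx.
have H1 := IH B' ltB'n dD'; rewrite eU eI in H1.
have H2 := maxext_exchange (subset_trans (subsetIr A B) (subsetUr A B)) dD iU iI.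
have sB' : B' \subset A :|: B by apply: subset_trans (subsetUr A B); apply: subD1set.
have H3 := maxext_exchange sB' dD iU iB'.
rewrite /B' setD1K // in H3.
exact: ele_eadd_cancel H2 H1 H3.
Qed.

End MaxOverExtensions.

Theorem lemma1 (R : realFieldType) (N : finType) (f : {set N} -> option R)
    (X Y I : {set N}) (q : N -> R) :
  Mnat_concave f -> X \in dom f -> Y \in dom f -> I \subset X :\: Y ->
  let C := X :&: Y in
  let X0 := X :\: Y in
  let Y0 := Y :\: X in
  let f1 := fun J : {set N} => f ((X0 :\: I) :|: C :|: J) in
  let f2 := fun J : {set N} => f (I :|: C :|: (Y0 :\: J)) in
  let qs := fun (p : N -> R) (J : {set N}) => \sum_(j in J) p j in
  let g1 := fun p : N -> R =>
    \emax_(J in powerset Y0) eadd (f1 J) (Some (- qs p J)) in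
  let g2 := fun p : N -> R =>
    \emax_(J in powerset Y0) eadd (f2 J) (Some (- qs p J)) in
  ele (eadd (f X) (f Y)) (eadd (g1 q) (g2 (fun j => - q j))).
Proof.
move=> fM _ _ sI.
pose C := X :&: Y; pose Y0 := Y :\: X; pose s := \sum_(j in Y0) q j.
pose A := (X :\: Y :\: I) :|: C; pose B := I :|: C.
change (ele (eadd (f X) (f Y)) (eadd (maxext f Y0 q A)
  (\emax_(J in powerset Y0) eadd (f (B :|: (Y0 :\: J))) (Some (- \sum_(j in J) - q j))))).
have eU : A :|: B = X.
  apply/setP => x; rewrite !inE; case: (boolP (x \in I)) => [/(subsetP sI)|].
    by rewrite inE => /andP[_ ->]; rewrite !orbT.
  by case: (x \in X); case: (x \in Y).
have eI : A :&: B = C.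
  apply/setP => x; rewrite !inE; case: (boolP (x \in I)) => [/(subsetP sI)|].
    by rewrite inE => /andP[/negbTE-> ->].
  by case: (x \in X); case: (x \in Y).
have dXY0 : [disjoint A :|: B & Y0].
  by rewrite eU; apply/pred0P => x; rewrite !inE; case: (x \in X); rewrite ?andbF.
have hX := f_le_maxext f Y0 q X.
have eY : C :|: Y0 = Y.
  by apply/setP => x; rewrite !inE; case: (x \in X); case: (x \in Y).
have hY := le_maxext f Y0 q C (subxx Y0); rewrite eY in hY.
have hAB := maxext_submodular f Y0 q fM A B dXY0; rewrite eU eI in hAB.
have hB := le_maxext_compl f Y0 q B.
rewrite -(eaddNK (f Y) s) eaddA.
apply: ele_trans (ele_eadd (ele_eadd hX hY) (ele_refl _)) _.
apply: ele_trans (ele_eadd hAB (ele_refl _)) _.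
by rewrite -eaddA; apply: ele_eadd (ele_refl _) hB.
Qed.
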